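(* Let $G$ be a locally finite unweighted graph and $(x,y)\in E(G)$. Let $H$ be the subgraph of $G$ induced by $V_{(x,y)}=N_G(x)\cup N_G(y)\cup P_G(x,y)$. Then $\kappa_G(x,y)=\kappa_H(x,y)$. Moreover, if $H'$ denotes the graph obtained from $H$ by deleting all edges between $\Delta_G(x,y)$ and $P_G(x,y)$, then $\kappa_G(x,y)=\kappa_{H'}(x,y)$.
   Context: For a graph $K$ containing the edge $(x,y)$: $d_K$ is the shortest-path metric of $K$, $N_K(v)$ the neighbour set and $d_v$ the degree of $v$ in $K$, $m_v$ the uniform probability measure on $N_K(v)$, and $\kappa_K(x,y)=1-W_1^K(m_x,m_y)$, where $W_1^K(\mu,\nu)=\inf_{\pi}\sum_{u,w}\pi(u,w)d_K(u,w)$ is the transportation distance, the infimum being over couplings $\pi$ of $\mu$ and $\nu$. $\Delta_G(x,y)=N_G(x)\cap N_G(y)$, and $P_G(x,y)=\{v\in V(G): d_G(x,v)=d_G(y,v)=2\}$. *)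

From Stdlib Require Import Reals List Classical ClassicalEpsilon.
From Coquelicot Require Import Coquelicot.
Open Scope R_scope.

(* A graph K is a vertex type [V] with an adjacency relation [adj].
   "Simple/unweighted" and "locally finite" are stated as hypotheses. *)

Definition simple_graph {V : Type} (adj : V -> V -> Prop) : Prop :=
  (forall u v, adj u v -> adj v u) /\ (forall u, ~ adj u u).

Definition nbr_list {V : Type} (adj : V -> V -> Prop) (v : V) (l : list V) : Prop :=
  NoDup l /\ forall w, adj v w <-> In w l.

Definition locally_finite {V : Type} (adj : V -> V -> Prop) : Prop :=
  forall v, exists l, nbr_list adj v l.

(* a chosen enumeration of N_K(v) (meaningful when K is locally finite) *)
Definition nbrs {V : Type} (adj : V -> V -> Prop) (v : V) : list V :=
  epsilon (inhabits nil) (nbr_list adj v).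

Definition deg {V : Type} (adj : V -> V -> Prop) (v : V) : nat :=
  length (nbrs adj v).

Inductive walk {V : Type} (adj : V -> V -> Prop) : V -> V -> nat -> Prop :=
| walk0 : forall u, walk adj u u 0
| walkS : forall u v w n, adj u v -> walk adj v w n -> walk adj u w (S n).

Definition dist_is {V : Type} (adj : V -> V -> Prop) (u w : V) (n : nat) : Prop :=
  walk adj u w n /\ forall m, walk adj u w m -> (n <= m)%nat.

(* shortest-path metric d_K (only used where u, w are connected) *)
Definition dist {V : Type} (adj : V -> V -> Prop) (u w : V) : nat :=
  epsilon (inhabits 0%nat) (dist_is adj u w).

Definition sumR {A : Type} (l : list A) (f : A -> R) : R :=
  fold_right Rplus 0 (map f l).

(* pi is a coupling of m_x and m_y (uniform measures on N_K(x), N_K(y)) *)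
Definition coupling {V : Type} (adj : V -> V -> Prop) (x y : V) (pi : V -> V -> R) : Prop :=
  (forall u w, 0 <= pi u w) /\
  (forall u w, ~ (adj x u /\ adj y w) -> pi u w = 0) /\
  (forall u, adj x u -> sumR (nbrs adj y) (fun w => pi u w) = / INR (deg adj x)) /\
  (forall w, adj y w -> sumR (nbrs adj x) (fun u => pi u w) = / INR (deg adj y)).

Definition transport_cost {V : Type} (adj : V -> V -> Prop) (x y : V) (pi : V -> V -> R) : R :=
  sumR (nbrs adj x) (fun u => sumR (nbrs adj y) (fun w => pi u w * INR (dist adj u w))).

Definition W1 {V : Type} (adj : V -> V -> Prop) (x y : V) : R :=
  real (Glb_Rbar (fun c => exists pi, coupling adj x y pi /\ c = transport_cost adj x y pi)).

Definition kappa {V : Type} (adj : V -> V -> Prop) (x y : V) : R := 1 - W1 adj x y.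

Definition Delta {V : Type} (adj : V -> V -> Prop) (x y v : V) : Prop := adj x v /\ adj y v.
Definition Pset {V : Type} (adj : V -> V -> Prop) (x y v : V) : Prop :=
  dist_is adj x v 2 /\ dist_is adj y v 2.

Definition Vxy {V : Type} (adj : V -> V -> Prop) (x y v : V) : Prop :=
  adj x v \/ adj y v \/ Pset adj x y v.

Definition adjH {V : Type} (adj : V -> V -> Prop) (x y : V)
  (a b : {v : V | Vxy adj x y v}) : Prop := adj (proj1_sig a) (proj1_sig b).

Definition adjH' {V : Type} (adj : V -> V -> Prop) (x y : V)
  (a b : {v : V | Vxy adj x y v}) : Prop :=
  adjH adj x y a b /\
  ~ (Delta adj x y (proj1_sig a) /\ Pset adj x y (proj1_sig b)) /\
  ~ (Pset adj x y (proj1_sig a) /\ Delta adj x y (proj1_sig b)).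

(* The transport distance between m_x and m_y only sees the neighbourhoods of x and y and the
   distances between a neighbour u of x and a neighbour w of y.  Such a distance is at most 3
   (walk u, x, y, w), so it is determined by whether u = w, whether u ~ w, and whether u and w
   have a common neighbour.  Every common neighbour of u and w lies in N(x) ∪ N(y) ∪ P(x,y),
   so H sees all of this.  In H', a path u - v - w through v ∈ P(x,y) avoids Δ(x,y), and when
   u or w lies in Δ(x,y) the path through y (resp. x) can be used instead. *)

From Pilot Require Import Defs.
From Stdlib Require Import Reals List Classical ClassicalEpsilon Permutation FinFun Lia Lra.
From Coquelicot Require Import Coquelicot.
Open Scope R_scope.

Lemma proj1_sig_inj {V} {P : V -> Prop} (a b : {v | P v}) :
  proj1_sig a = proj1_sig b -> a = b.
Proof. apply eq_sig_hprop; intros; apply proof_irrelevance. Qed.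

Lemma nbr_list_nbrs {V} (adj : V -> V -> Prop) v :
  (exists l, nbr_list adj v l) -> nbr_list adj v (nbrs adj v).
Proof. apply epsilon_spec. Qed.

Lemma sumR_map {A B} (f : A -> B) l g : sumR (map f l) g = sumR l (fun a => g (f a)).
Proof. unfold sumR; rewrite map_map; reflexivity. Qed.

Lemma sumR_perm {A} (l l' : list A) g : Permutation l l' -> sumR l g = sumR l' g.
Proof. induction 1; unfold sumR in *; simpl in *; lra. Qed.

Lemma sumR_ext_in {A} (l : list A) g h :
  (forall a, In a l -> g a = h a) -> sumR l g = sumR l h.
Proof.
  induction l as [|a l IH]; intros H; unfold sumR in *; simpl; [reflexivity|].
  rewrite H, IH; [reflexivity | intros b Hb; apply H | ]; simpl; auto.
Qed.

Lemma walk_0_iff {V} (adj : V -> V -> Prop) u w : walk adj u w 0 <-> u = w.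
Proof. split; [intros H; inversion H; reflexivity | intros ->; constructor]. Qed.

Lemma walk_1_iff {V} (adj : V -> V -> Prop) u w : walk adj u w 1 <-> adj u w.
Proof.
  split.
  - intros H; inversion H as [|? ? ? ? Huv Hvw]; subst.
    apply walk_0_iff in Hvw; subst; assumption.
  - intros H; econstructor; [exact H | constructor].
Qed.

Lemma walk_2_iff {V} (adj : V -> V -> Prop) u w :
  walk adj u w 2 <-> exists v, adj u v /\ adj v w.
Proof.
  split.
  - intros H; inversion H as [|? v ? ? Huv Hvw]; subst.
    exists v; split; [assumption | apply walk_1_iff; assumption].
  - intros [v [Huv Hvw]]; econstructor; [exact Huv | apply walk_1_iff, Hvw].
Qed.

Lemma dist_is_exists {V} (adj : V -> V -> Prop) u w k :
  walk adj u w k -> exists d, (d <= k)%nat /\ dist_is adj u w d.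
Proof.
  induction k as [k IH] using (well_founded_induction Wf_nat.lt_wf); intros Hk.
  destruct (classic (exists m, (m < k)%nat /\ walk adj u w m)) as [[m [Hm Wm]] | Hmin].
  - destruct (IH m Hm Wm) as [d [Hd Dd]]; exists d; split; [lia | exact Dd].
  - exists k; split; [lia | split; [exact Hk |]].
    intros m Wm; destruct (Nat.lt_ge_cases m k); [exfalso; eauto | assumption].
Qed.

Lemma dist_eq_dist_is {V} (adj : V -> V -> Prop) u w d :
  dist_is adj u w d -> Defs.dist adj u w = d.
Proof.
  intros Dd; assert (De : dist_is adj u w (Defs.dist adj u w))
    by (unfold Defs.dist; apply epsilon_spec; eauto).
  destruct Dd as [Wd Md], De as [We Me]; specialize (Md _ We); specialize (Me _ Wd); lia.
Qed.

Lemma dist_eq_of_walks {U V} (A : U -> U -> Prop) (B : V -> V -> Prop) u w u' w' k :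
  walk A u w k -> walk B u' w' k ->
  (forall m, (m < k)%nat -> walk A u w m <-> walk B u' w' m) ->
  Defs.dist A u w = Defs.dist B u' w'.
Proof.
  intros WA WB Hiff.
  destruct (dist_is_exists A u w k WA) as [d [Hdk [Wd Md]]].
  rewrite (dist_eq_dist_is A u w d) by (split; assumption).
  symmetry; apply dist_eq_dist_is; split.
  - destruct (Nat.eq_dec d k) as [-> | Hne]; [exact WB | apply Hiff; [lia | exact Wd]].
  - intros m Wm; destruct (Nat.lt_ge_cases m k) as [Hm | Hm]; [apply Md, Hiff | lia]; assumption.
Qed.

Lemma lift_list_sig {V} (P : V -> Prop) (l : list V) :
  (forall v, In v l -> P v) -> exists l' : list {v | P v}, map (@proj1_sig _ _) l' = l.
Proof.
  induction l as [|a l IH]; intros H; [exists nil; reflexivity |].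
  destruct IH as [l' Hl']; [intros v Hv; apply H; right; exact Hv |].
  exists (exist P a (H a (or_introl eq_refl)) :: l'); simpl; rewrite Hl'; reflexivity.
Qed.

Definition sig_extend {V} {P : V -> Prop} (f : {v | P v} -> {v | P v} -> R) (v w : V) : R :=
  match excluded_middle_informative (P v), excluded_middle_informative (P w) with
  | left pv, left pw => f (exist P v pv) (exist P w pw)
  | _, _ => 0
  end.

Lemma sig_extend_sig {V} {P : V -> Prop} (f : {v | P v} -> {v | P v} -> R) a b :
  sig_extend f (proj1_sig a) (proj1_sig b) = f a b.
Proof.
  unfold sig_extend.
  destruct (excluded_middle_informative _) as [pa|]; [|destruct a; contradiction].
  destruct (excluded_middle_informative _) as [pb|]; [|destruct b; contradiction].
  f_equal; apply proj1_sig_inj; reflexivity.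
Qed.

Lemma sig_extend_ge0 {V} {P : V -> Prop} (f : {v | P v} -> {v | P v} -> R) :
  (forall a b, 0 <= f a b) -> forall v w, 0 <= sig_extend f v w.
Proof.
  intros H v w; unfold sig_extend.
  destruct (excluded_middle_informative (P v)), (excluded_middle_informative (P w)); auto; lra.
Qed.

Section SubgraphTransport.

Variables (V : Type) (adj : V -> V -> Prop) (P : V -> Prop).
Hypothesis Hlf : locally_finite adj.
Variable A : {v | P v} -> {v | P v} -> Prop.

Section Neighbourhood.

Variables (x : V) (hx : P x).
Hypothesis HN : forall v, adj x v -> P v.
Hypothesis HA : forall b, A (exist P x hx) b <-> adj x (proj1_sig b).

Lemma nbr_list_sig : nbr_list A (exist P x hx) (nbrs A (exist P x hx)).
Proof.
  destruct (nbr_list_nbrs adj x (Hlf x)) as [Hnd Hin].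
  apply nbr_list_nbrs.
  destruct (lift_list_sig P (nbrs adj x)) as [l' Hl']; [intros v Hv; apply HN, Hin, Hv |].
  exists l'; split.
  - apply (NoDup_map_inv (@proj1_sig _ _)); rewrite Hl'; exact Hnd.
  - intros b; rewrite HA, Hin, <- Hl'; split.
    + intros Hb; apply in_map_iff in Hb as [b0 [E Hb0]].
      rewrite (proj1_sig_inj b b0) by congruence; exact Hb0.
    + apply in_map.
Qed.

Lemma nbrs_sig_perm :
  Permutation (map (@proj1_sig _ _) (nbrs A (exist P x hx))) (nbrs adj x).
Proof.
  destruct (nbr_list_nbrs adj x (Hlf x)) as [Hnd Hin].
  destruct nbr_list_sig as [HndA HinA].
  apply NoDup_Permutation; [apply Injective_map_NoDup; [exact proj1_sig_inj | exact HndA] | exact Hnd |].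
  intros v; rewrite <- Hin; split.
  - intros Hv; apply in_map_iff in Hv as [b [<- Hb]]; apply HA, HinA, Hb.
  - intros Hv; apply in_map_iff; exists (exist P v (HN v Hv)); split; [reflexivity |].
    apply HinA, HA, Hv.
Qed.

Lemma deg_sig : deg A (exist P x hx) = deg adj x.
Proof. unfold deg; rewrite <- (Permutation_length nbrs_sig_perm), length_map; reflexivity. Qed.

Lemma sumR_nbrs_sig (g : V -> R) :
  sumR (nbrs A (exist P x hx)) (fun b => g (proj1_sig b)) = sumR (nbrs adj x) g.
Proof. rewrite <- (sumR_perm _ _ _ nbrs_sig_perm), sumR_map; reflexivity. Qed.

End Neighbourhood.

Variables (x y : V) (hx : P x) (hy : P y).
Hypotheses (HNx : forall v, adj x v -> P v) (HNy : forall v, adj y v -> P v).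
Hypotheses (HAx : forall b, A (exist P x hx) b <-> adj x (proj1_sig b))
           (HAy : forall b, A (exist P y hy) b <-> adj y (proj1_sig b)).
Hypothesis Hdist : forall a b, adj x (proj1_sig a) -> adj y (proj1_sig b) ->
  Defs.dist A a b = Defs.dist adj (proj1_sig a) (proj1_sig b).

Lemma transport_cost_sig (pi : V -> V -> R) :
  transport_cost A (exist P x hx) (exist P y hy) (fun a b => pi (proj1_sig a) (proj1_sig b))
  = transport_cost adj x y pi.
Proof.
  unfold transport_cost.
  rewrite <- (sumR_nbrs_sig x hx HNx HAx); apply sumR_ext_in; intros a Ha.
  rewrite <- (sumR_nbrs_sig y hy HNy HAy); apply sumR_ext_in; intros b Hb.
  rewrite Hdist; [reflexivity | |].
  - apply HAx, (nbr_list_sig x hx HNx HAx), Ha.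
  - apply HAy, (nbr_list_sig y hy HNy HAy), Hb.
Qed.

Lemma coupling_restrict (pi : V -> V -> R) :
  coupling adj x y pi ->
  coupling A (exist P x hx) (exist P y hy) (fun a b => pi (proj1_sig a) (proj1_sig b)).
Proof.
  intros (H0 & Hz & Hrow & Hcol); split; [|split; [|split]].
  - intros; apply H0.
  - intros a b Hn; apply Hz; intros [h1 h2]; apply Hn; split; [apply HAx | apply HAy]; assumption.
  - intros a Ha; rewrite (sumR_nbrs_sig y hy HNy HAy (pi (proj1_sig a))), deg_sig by assumption.
    apply Hrow, HAx, Ha.
  - intros b Hb; rewrite (sumR_nbrs_sig x hx HNx HAx (fun u => pi u (proj1_sig b))), deg_sig
      by assumption.
    apply Hcol, HAy, Hb.
Qed.

Lemma coupling_extend (pi : {v | P v} -> {v | P v} -> R) :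
  coupling A (exist P x hx) (exist P y hy) pi -> coupling adj x y (sig_extend pi).
Proof.
  intros (H0 & Hz & Hrow & Hcol); split; [|split; [|split]].
  - exact (sig_extend_ge0 pi H0).
  - intros u w Hn; unfold sig_extend.
    destruct (excluded_middle_informative (P u)), (excluded_middle_informative (P w));
      try reflexivity.
    apply Hz; intros [h1 h2]; apply Hn; split; [apply HAx in h1 | apply HAy in h2]; assumption.
  - intros u Hu; set (a := exist P u (HNx u Hu)).
    rewrite <- (sumR_nbrs_sig y hy HNy HAy), <- (deg_sig x hx HNx HAx).
    change u with (proj1_sig a); rewrite <- (Hrow a) by (apply HAx, Hu).
    apply sumR_ext_in; intros b _; apply sig_extend_sig.
  - intros w Hw; set (b := exist P w (HNy w Hw)).
    rewrite <- (sumR_nbrs_sig x hx HNx HAx (fun u => sig_extend pi u w)),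
      <- (deg_sig y hy HNy HAy).
    change w with (proj1_sig b); rewrite <- (Hcol b) by (apply HAy, Hw).
    apply sumR_ext_in; intros a _; apply sig_extend_sig.
Qed.

Lemma W1_sig : W1 adj x y = W1 A (exist P x hx) (exist P y hy).
Proof.
  unfold W1; f_equal; apply Glb_Rbar_eqset; intros c; split.
  - intros [pi [Hpi ->]]; eexists; split; [apply coupling_restrict, Hpi |].
    symmetry; apply transport_cost_sig.
  - intros [pi [Hpi ->]]; exists (sig_extend pi); split; [apply coupling_extend, Hpi |].
    rewrite <- transport_cost_sig; unfold transport_cost.
    apply sumR_ext_in; intros a _; apply sumR_ext_in; intros b _.
    rewrite sig_extend_sig; reflexivity.
Qed.

End SubgraphTransport.

Section LocalSubgraph.

Variables (V : Type) (adj : V -> V -> Prop).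
Hypotheses (Hsym : forall u v, adj u v -> adj v u) (Hlf : locally_finite adj).
Variables (x y : V) (hx : Vxy adj x y x) (hy : Vxy adj x y y).
Hypothesis Hxy : adj x y.

Let sx : {v | Vxy adj x y v} := exist _ x hx.
Let sy : {v | Vxy adj x y v} := exist _ y hy.

Lemma W1_local_subgraph (A : {v | Vxy adj x y v} -> {v | Vxy adj x y v} -> Prop) :
  (forall a b, A a b -> adj (proj1_sig a) (proj1_sig b)) ->
  (forall u, adj x (proj1_sig u) -> A sx u /\ A u sx) ->
  (forall u, adj y (proj1_sig u) -> A sy u /\ A u sy) ->
  (forall u w, adj x (proj1_sig u) -> adj y (proj1_sig w) ->
     adj (proj1_sig u) (proj1_sig w) -> A u w) ->
  (forall u w v, adj x (proj1_sig u) -> adj y (proj1_sig w) ->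
     adj (proj1_sig u) v -> adj v (proj1_sig w) -> exists c, A u c /\ A c w) ->
  W1 adj x y = W1 A sx sy.
Proof.
  intros A_sub A_x A_y A_nbr A_path.
  apply W1_sig; auto.
  - intros v Hv; left; exact Hv.
  - intros v Hv; right; left; exact Hv.
  - intros b; split; [apply A_sub | intros h; apply A_x, h].
  - intros b; split; [apply A_sub | intros h; apply A_y, h].
  - intros a b Ha Hb; apply dist_eq_of_walks with (k := 3%nat).
    + apply walkS with sx; [apply A_x, Ha |].
      apply walkS with sy; [apply A_x, Hxy | apply walk_1_iff, A_y, Hb].
    + apply walkS with x; [apply Hsym, Ha |].
      apply walkS with y; [exact Hxy | apply walk_1_iff, Hb].
    + intros [|[|[|m]]] Hm; [| | | lia].
      * rewrite !walk_0_iff; split; [intros ->; reflexivity | apply proj1_sig_inj].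
      * rewrite !walk_1_iff; split; [apply A_sub | apply A_nbr; assumption].
      * rewrite !walk_2_iff; split.
        -- intros [c [h1 h2]]; exists (proj1_sig c); split; apply A_sub; assumption.
        -- intros [v [h1 h2]]; eapply A_path; eassumption.
Qed.

Lemma nbr_not_Pset v : adj x v \/ adj y v -> ~ Pset adj x y v.
Proof.
  intros Hv [[_ Mx] [_ My]].
  destruct Hv as [Hv | Hv]; [specialize (Mx 1%nat) | specialize (My 1%nat)];
    rewrite walk_1_iff in *; specialize (Mx Hv) || specialize (My Hv); lia.
Qed.

Lemma Vxy_of_two_path u w v :
  adj x u -> adj y w -> adj u v -> adj v w -> Vxy adj x y v.
Proof.
  intros Hu Hw Huv Hvw.
  destruct (classic (adj x v)) as [Hxv | Hxv]; [left; exact Hxv |].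
  destruct (classic (adj y v)) as [Hyv | Hyv]; [right; left; exact Hyv |].
  assert (dist_is_2 : forall z t, adj z t -> adj t v -> z <> v -> ~ adj z v ->
                        dist_is adj z v 2).
  { intros z t Hzt Htv Hzv Hnzv; split; [apply walk_2_iff; eauto |].
    intros [|[|m]] Hm; [| | lia].
    - apply walk_0_iff in Hm; contradiction.
    - apply walk_1_iff in Hm; contradiction. }
  right; right; split.
  - apply dist_is_2 with u; auto; intros <-; exact (Hyv (Hsym _ _ Hxy)).
  - apply dist_is_2 with w; auto; intros <-; exact (Hxv Hxy).
Qed.

Lemma W1_adjH : W1 adj x y = W1 (adjH adj x y) sx sy.
Proof.
  apply W1_local_subgraph; unfold adjH; simpl; auto.
  intros u w v Hu Hw Huv Hvw.
  exists (exist _ v (Vxy_of_two_path _ _ v Hu Hw Huv Hvw)); simpl; auto.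
Qed.

Hypothesis Hirr : forall u, ~ adj u u.

(* In H' a two-path from u ∈ Δ(x,y) to w ∈ N(y) is rerouted through y, and symmetrically
   through x; otherwise the middle vertex is kept. *)
Lemma W1_adjH' : W1 adj x y = W1 (adjH' adj x y) sx sy.
Proof.
  assert (Px : ~ Pset adj x y x) by (apply nbr_not_Pset; right; apply Hsym, Hxy).
  assert (Py : ~ Pset adj x y y) by (apply nbr_not_Pset; left; exact Hxy).
  assert (Dx : ~ Defs.Delta adj x y x) by (intros [h _]; exact (Hirr _ h)).
  assert (Dy : ~ Defs.Delta adj x y y) by (intros [_ h]; exact (Hirr _ h)).
  apply W1_local_subgraph; unfold adjH', adjH; simpl.
  - tauto.
  - intros u Hu; repeat split; auto; tauto.
  - intros u Hu; repeat split; auto; tauto.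
  - intros u w Hu Hw Huw.
    pose proof (nbr_not_Pset _ (or_introl Hu)); pose proof (nbr_not_Pset _ (or_intror Hw)); tauto.
  - intros u w v Hu Hw Huv Hvw.
    pose proof (nbr_not_Pset _ (or_introl Hu)); pose proof (nbr_not_Pset _ (or_intror Hw)).
    destruct (classic (Defs.Delta adj x y (proj1_sig u))) as [[_ Hyu] | Hu'].
    { exists sy; simpl; repeat split; auto; tauto. }
    destruct (classic (Defs.Delta adj x y (proj1_sig w))) as [[Hxw _] | Hw'].
    { exists sx; simpl; repeat split; auto; tauto. }
    exists (exist _ v (Vxy_of_two_path _ _ v Hu Hw Huv Hvw)); simpl; repeat split; auto; tauto.
Qed.

End LocalSubgraph.

Theorem lemma2p3 (V : Type) (adj : V -> V -> Prop)
  (Hsimple : simple_graph adj) (Hlf : locally_finite adj)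
  (x y : V) (Hxy : adj x y)
  (hx : Vxy adj x y x) (hy : Vxy adj x y y) :
  kappa adj x y = kappa (adjH adj x y) (exist _ x hx) (exist _ y hy) /\
  kappa adj x y = kappa (adjH' adj x y) (exist _ x hx) (exist _ y hy).
Proof.
  destruct Hsimple as [Hsym Hirr]; unfold kappa; split; f_equal.
  - apply W1_adjH; assumption.
  - apply W1_adjH'; assumption.
Qed.
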